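(* Let $\rho^n$ be a periodic grid function on the grid of $(0,1)^3$ with $\rho^n_{i,j,k}>0$ for all $0\le i,j,k\le N_0-1$, and let $\hat\rho^{n+1}$ be any periodic grid function with $\hat\rho^{n+1}_{i,j,k}>0$ for all indices (e.g. the solution of the semi-implicit predictor in the context). Set $\hat\rho^{n+1/2}=\tfrac12(\rho^n+\hat\rho^{n+1})$ and $\mathcal{M}^{n+1/2}_h=\mathcal{A}_h\big(D(\hat\rho^{n+1/2})\hat\rho^{n+1/2}\big)$. Then there exists a unique periodic grid function $\rho^{n+1}$ with $\rho^{n+1}_{i,j,k}>0$ for all indices satisfying $$\frac{\rho^{n+1}-\rho^n}{\Delta t}=\nabla_h\cdot\big(\mathcal{M}^{n+1/2}_h\nabla_h\mu^{n+1/2}\big),\qquad \mu^{n+1/2}=Q(\rho^{n+1},\rho^n)+\Delta t\,(\ln\rho^{n+1}-\ln\rho^n),$$ where all nonlinear functions are applied pointwise.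
   Context: $N_0\ge1$, $h=1/N_0$; grid functions live on $\{(ih,jh,kh):0\le i,j,k\le N_0-1\}$ and are periodic (indices mod $N_0$). $\Delta t>0$, $C\in\mathbb{R}$, $D:(0,\infty)\to(0,\infty)$ is a given (continuous) diffusion coefficient. $F(\rho)=\rho\ln\rho+C\rho$, and $Q(p,q)=\frac{F(p)-F(q)}{p-q}$ for $p\ne q$, $Q(p,p)=F'(p)=\ln p+1+C$. Discrete operators: $(\nabla_h f)$ has components at staggered points, e.g. $(D_xf)_{i+1/2,j,k}=(f_{i+1,j,k}-f_{i,j,k})/h$ and similarly in $y,z$; for a staggered vector field $\mathbf{v}=(v^x,v^y,v^z)$, $(\nabla_h\cdot\mathbf v)_{i,j,k}=(v^x_{i+1/2,j,k}-v^x_{i-1/2,j,k}+v^y_{i,j+1/2,k}-v^y_{i,j-1/2,k}+v^z_{i,j,k+1/2}-v^z_{i,j,k-1/2})/h$; the averaging operator $\mathcal{A}_h$ maps a cell-centered $g$ to staggered values, e.g. $(\mathcal{A}_hg)_{i+1/2,j,k}=\tfrac12(g_{i,j,k}+g_{i+1,j,k})$, and the product $\mathcal{M}\nabla_h\mu$ is taken componentwise at staggered points. A possible predictor is the semi-implicit scheme $\frac{\hat\rho^{n+1}-\rho^n}{\Delta t}=\nabla_h\cdot\big(\mathcal{A}_h[D(\rho^n)]\nabla_h\hat\rho^{n+1}\big)$, whose solution is positive when $\rho^n$ is. *)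

From HB Require Import structures.
From mathcomp Require Import all_boot all_order all_algebra.
From mathcomp Require Import all_classical all_reals all_analysis.
Set Implicit Arguments. Unset Strict Implicit. Unset Printing Implicit Defensive.
Import Order.TTheory GRing.Theory Num.Theory.
Local Open Scope ring_scope.

Section Grid.
Variable R : realType.
Variable N0 : nat.

(* periodic grid functions on {0..N0-1}^3; index shifts are taken mod N0 *)
Definition grid := 'I_N0 -> 'I_N0 -> 'I_N0 -> R.

Definition gh : R := (N0%:R)^-1.

Definition ip (i : 'I_N0) : 'I_N0 := ordS i.
Definition im (i : 'I_N0) : 'I_N0 := ord_pred i.

(* staggered vector field: vx i j k = value at (i+1/2,j,k), vy at (i,j+1/2,k),
   vz at (i,j,k+1/2) *)
Record sgrid := SGrid { sx : grid; sy : grid; sz : grid }.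

Definition grad_h (f : grid) : sgrid :=
  SGrid (fun i j k => (f (ip i) j k - f i j k) / gh)
        (fun i j k => (f i (ip j) k - f i j k) / gh)
        (fun i j k => (f i j (ip k) - f i j k) / gh).

Definition div_h (v : sgrid) : grid := fun i j k =>
  (sx v i j k - sx v (im i) j k
   + sy v i j k - sy v i (im j) k
   + sz v i j k - sz v i j (im k)) / gh.

Definition avg_h (g : grid) : sgrid :=
  SGrid (fun i j k => (g i j k + g (ip i) j k) / 2)
        (fun i j k => (g i j k + g i (ip j) k) / 2)
        (fun i j k => (g i j k + g i j (ip k)) / 2).

Definition smul (m v : sgrid) : sgrid :=
  SGrid (fun i j k => sx m i j k * sx v i j k)
        (fun i j k => sy m i j k * sy v i j k)
        (fun i j k => sz m i j k * sz v i j k).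

End Grid.

Section Energy.
Variable R : realType.
Definition Fen (C : R) (r : R) : R := r * ln r + C * r.
Definition Qdq (C : R) (p q : R) : R :=
  if p == q then ln p + 1 + C else (Fen C p - Fen C q) / (p - q).
End Energy.

Definition scheme (R : realType) (N0 : nat) (dt C : R) (D : R -> R)
  (rho0 rhohat rho1 : grid R N0) : Prop :=
  let rhalf : grid R N0 := fun i j k => (rho0 i j k + rhohat i j k) / 2 in
  let M := avg_h (fun i j k => D (rhalf i j k) * rhalf i j k) in
  let mu : grid R N0 := fun i j k =>
     Qdq C (rho1 i j k) (rho0 i j k)
     + dt * (ln (rho1 i j k) - ln (rho0 i j k)) in
  forall i j k,
    (rho1 i j k - rho0 i j k) / dt = div_h (smul M (grad_h mu)) i j k.

(* With g(x) := Q(x, rho0) + dt (ln x - ln rho0), the scheme reads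
   (rho1 - rho0) / dt = div_h (M grad_h g(rho1)), and g is an increasing bijection of
   (0, +oo) onto R because F is convex.  Uniqueness is a discrete comparison principle:
   at a maximum of g(r) - g(r') the operator div_h (M grad_h .) is nonpositive, which
   forces r <= r'.  For existence, solving at each cell with the neighbouring values
   frozen is a monotone map on grid functions; grid functions of constant potential
   -S and S, with |F'(rho0)| <= S, are a sub- and a supersolution, so Knaster-Tarski
   yields a fixpoint, which is a solution. *)

From HB Require Import structures.
From mathcomp Require Import all_boot all_order all_algebra.
From mathcomp Require Import all_classical all_reals all_analysis.
From mathcomp.algebra_tactics Require Import ring lra.
Import Order.TTheory GRing.Theory Num.Theory.
Import numFieldNormedType.Exports.
Set Implicit Arguments. Unset Strict Implicit. Unset Printing Implicit Defensive.
Local Open Scope classical_set_scope.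
Local Open Scope ring_scope.

Section Entropy.
Variables (R : realType) (C : R).
Implicit Types (a b c p q x y : R).

Definition dFen a : R := ln a + 1 + C.

Lemma Fen_tangent a b : 0 < a -> 0 < b -> Fen C a + dFen a * (b - a) <= Fen C b.
Proof.
move=> a0 b0; rewrite /Fen /dFen.
have : ln (1 + (a / b - 1)) <= a / b - 1.
  by apply: le_ln1Dx; rewrite ltrBrDl addrN divr_gt0.
rewrite addrC subrK ln_div ?posrE // => /(ler_wpM2l (ltW b0)).
have -> : b * (a / b - 1) = a - b by field; rewrite gt_eqF.
lra.
Qed.

Lemma Qdq_id q : Qdq C q q = dFen q.
Proof. by rewrite /Qdq eqxx. Qed.

Lemma Qdq_mulB p q : p != q -> Qdq C p q * (p - q) = Fen C p - Fen C q.
Proof. by move=> pq; rewrite /Qdq (negbTE pq) divfK // subr_eq0. Qed.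

Lemma Qdq_sym p q : Qdq C p q = Qdq C q p.
Proof.
rewrite /Qdq eq_sym; have [->//|_] := eqVneq q p.
by rewrite -mulrNN -invrN !opprB.
Qed.

Lemma dFen_le_Qdq a b : 0 < a -> a < b -> dFen a <= Qdq C b a.
Proof.
move=> a0 ab; have ba : b != a by rewrite gt_eqF.
rewrite -(ler_pM2r (_ : 0 < b - a)) ?subr_gt0 // Qdq_mulB //.
by have := Fen_tangent a0 (lt_trans a0 ab); lra.
Qed.

Lemma Qdq_le_dFen a b : 0 < a -> a < b -> Qdq C b a <= dFen b.
Proof.
move=> a0 ab; have ba : b != a by rewrite gt_eqF.
rewrite -(ler_pM2r (_ : 0 < b - a)) ?subr_gt0 // Qdq_mulB //.
by have := Fen_tangent (lt_trans a0 ab) a0; lra.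
Qed.

(* The chord over [a, c] is the weighted mean of the chords over [a, b] and [b, c]. *)
Lemma Qdq_chord a b c : 0 < a -> a < b -> b < c ->
  Qdq C b a <= Qdq C c a <= Qdq C c b.
Proof.
move=> a0 ab bc; have b0 := lt_trans a0 ab.
have ba : b != a by rewrite gt_eqF.
have cb : c != b by rewrite gt_eqF.
have ca : c != a by rewrite gt_eqF // (lt_trans ab).
have eab := Qdq_mulB ba; have ebc := Qdq_mulB cb; have eac := Qdq_mulB ca.
have lab := Qdq_le_dFen a0 ab; have lbc := dFen_le_Qdq b0 bc.
have hab : Qdq C b a * (c - b) <= Qdq C c b * (c - b) by rewrite ler_pM2r ?subr_gt0 //; lra.
have hbc : Qdq C b a * (b - a) <= Qdq C c b * (b - a) by rewrite ler_pM2r ?subr_gt0 //; lra.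
apply/andP; split; rewrite -(ler_pM2r (_ : 0 < c - a)) ?subr_gt0 ?(lt_trans ab) //; lra.
Qed.

Lemma Qdq_le_l q x y : 0 < q -> 0 < x -> x <= y -> Qdq C x q <= Qdq C y q.
Proof.
move=> q0 x0; rewrite le_eqVlt => /predU1P[->//|xy].
have [qx|xq] := ltrP q x; first by have /andP[] := Qdq_chord q0 qx xy; rewrite Qdq_sym.
have [yq|qy] := ltrP y q.
  by have /andP[_] := Qdq_chord x0 xy yq; rewrite (Qdq_sym y) (Qdq_sym x q).
rewrite (Qdq_sym x); apply: (@le_trans _ _ (dFen q)).
  have [->|xq'] := eqVneq x q; first by rewrite Qdq_id.
  by apply: Qdq_le_dFen; rewrite // lt_neqAle xq' xq.
have [<-|qy'] := eqVneq q y; first by rewrite Qdq_id.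
by apply: dFen_le_Qdq; rewrite // lt_neqAle qy' qy.
Qed.

Lemma Qdq_dFen_dist q x : 0 < q -> 0 < x -> `|Qdq C x q - dFen q| <= `|ln x - ln q|.
Proof.
move=> q0 x0; case: (ltrgtP x q) => [xq|qx|->]; last by rewrite Qdq_id !subrr normr0.
- have l1 := dFen_le_Qdq x0 xq; have l2 := Qdq_le_dFen x0 xq.
  have lnxq : ln x <= ln q by rewrite ler_ln ?posrE ?ltW.
  rewrite Qdq_sym !ler0_norm ?subr_le0 //; rewrite /dFen in l1 l2 *; lra.
- have l1 := dFen_le_Qdq q0 qx; have l2 := Qdq_le_dFen q0 qx.
  have lnqx : ln q <= ln x by rewrite ler_ln ?posrE ?ltW.
  rewrite !ger0_norm ?subr_ge0 //; rewrite /dFen in l1 l2 *; lra.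
Qed.

Lemma continuous_Fen x : 0 < x -> {for x, continuous (Fen C)}.
Proof.
move=> x0; apply: cvgD; last by apply: cvgM; [exact: cvg_cst | exact: cvg_id].
by apply: cvgM; [exact: cvg_id | exact: continuous_ln].
Qed.

Lemma continuous_Qdq_l q x : 0 < q -> 0 < x -> {for x, continuous (Qdq C ^~ q)}.
Proof.
move=> q0 x0; have [<-|xq] := eqVneq x q.
  rewrite /prop_for /continuous_at Qdq_id; apply/cvgrPdist_le => e e0.
  have := continuous_ln x0; move/cvgrPdist_le => /(_ e e0) lnx.
  have := @cvg_id _ (nbhs x); move/cvgrPdist_lt => /(_ x x0).
  apply: filter_app; near=> y => /= xy.
  have y0 : 0 < y by move: xy; rewrite ltr_distlC subrr => /andP[].
  rewrite distrC (le_trans (Qdq_dFen_dist x0 y0)) // distrC; near: y; exact: lnx.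
have near_ne : \forall y \near x, y != q.
  have := @cvg_id _ (nbhs x); move/cvgrPdist_lt => /(_ `|x - q|).
  rewrite normr_gt0 subr_eq0 => /(_ xq); apply: filterS => y.
  by apply: contraTneq => ->; rewrite ltxx.
have quot : {for x, continuous (fun y => (Fen C y - Fen C q) / (y - q))}.
  apply: cvgM; first exact: cvgB (continuous_Fen x0) (cvg_cst _).
  by apply: cvgV; [rewrite subr_eq0 | exact: cvgB cvg_id (cvg_cst _)].
rewrite /prop_for /continuous_at {2}/Qdq (negbTE xq); apply: cvg_trans quot.
by apply: near_eq_cvg; apply: filterS near_ne => y yq; rewrite /Qdq (negbTE yq).
Unshelve. all: by end_near.
Qed.

Section ChemicalPotential.
Variables (dt q : R).
Hypotheses (dt0 : 0 < dt) (q0 : 0 < q).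

Definition chem_pot x : R := Qdq C x q + dt * (ln x - ln q).

Lemma chem_pot_id : chem_pot q = dFen q.
Proof. by rewrite /chem_pot Qdq_id subrr mulr0 addr0. Qed.

Lemma chem_pot_homo : {in Num.pos &, {homo chem_pot : x y / x < y}}.
Proof.
move=> x y; rewrite !posrE => x0 y0 xy; rewrite /chem_pot.
have lnxy : ln x < ln y by rewrite ltr_ln ?posrE.
have := Qdq_le_l q0 x0 (ltW xy); have := ltr_pM2l dt0 (ln x) (ln y); rewrite lnxy.
lra.
Qed.

Lemma chem_pot_mono : {in Num.pos &, {mono chem_pot : x y / x <= y}}.
Proof. exact: le_mono_in chem_pot_homo. Qed.

Lemma affine_chem_pot_mono al ga : 0 <= al -> 0 < ga ->
  {in Num.pos &, {mono (fun x => al * x + ga * chem_pot x) : x y / x <= y}}.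
Proof.
move=> al0 ga0; apply: le_mono_in => x y x0 y0 xy.
have := chem_pot_homo x0 y0 xy; rewrite -(ltr_pM2l ga0).
by have := ler_wpM2l al0 (ltW xy); lra.
Qed.

Lemma continuous_chem_pot x : 0 < x -> {for x, continuous chem_pot}.
Proof.
move=> x0; apply: cvgD; first exact: continuous_Qdq_l.
apply: cvgM; first exact: cvg_cst.
by apply: cvgB; [exact: continuous_ln | exact: cvg_cst].
Qed.

(* IVT on [xl, xh]: below q the chord term is at most [dFen q] and above q at
   least [dFen q], so the logarithmic term alone decides the sign at the ends. *)
Lemma affine_chem_pot_surj al ga y : 0 <= al -> 0 < ga ->
  exists2 x, 0 < x & al * x + ga * chem_pot x = y.
Proof.
move=> al0 ga0; have gd0 : 0 < ga * dt by rewrite mulr_gt0.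
set f := fun x => al * x + ga * chem_pot x.
set xl := Num.min q (expR (ln q + (y - al * q - ga * dFen q) / (ga * dt))).
set xh := Num.max q (expR (ln q + (y - ga * dFen q) / (ga * dt))).
have xl0 : 0 < xl by rewrite lt_min q0 expR_gt0.
have xlq : xl <= q by rewrite ge_min lexx.
have xhq : q <= xh by rewrite le_max lexx.
have fl : f xl <= y.
  set z := (y - al * q - ga * dFen q) / (ga * dt).
  have lnxl : ln xl <= ln q + z.
    by rewrite -[leRHS]expRK ler_ln ?posrE ?expR_gt0 // ge_min lexx orbT.
  have hz : ga * dt * z = y - al * q - ga * dFen q by rewrite mulrC divfK ?gt_eqF.
  have hQ : Qdq C xl q <= dFen q by rewrite -Qdq_id Qdq_le_l.
  have := ler_wpM2l (ltW gd0) lnxl; have := ler_wpM2l (ltW ga0) hQ.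
  by have := ler_wpM2l al0 xlq; rewrite /f /chem_pot; lra.
have fh : y <= f xh.
  have xh0 : 0 < xh by rewrite lt_max q0.
  set z := (y - ga * dFen q) / (ga * dt).
  have lnxh : ln q + z <= ln xh.
    by rewrite -[leLHS]expRK ler_ln ?posrE ?expR_gt0 // le_max lexx orbT.
  have hz : ga * dt * z = y - ga * dFen q by rewrite mulrC divfK ?gt_eqF.
  have hQ : dFen q <= Qdq C xh q by rewrite -Qdq_id Qdq_le_l.
  have := ler_wpM2l (ltW gd0) lnxh; have := ler_wpM2l (ltW ga0) hQ.
  by have := mulr_ge0 al0 (ltW xh0); rewrite /f /chem_pot; lra.
have [x xin fx] : exists2 x, x \in `[xl, xh] & f x = y.
  apply: IVT; [exact: le_trans xhq | | by rewrite ge_min fl le_max fh orbT].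
  apply: continuous_in_subspaceT => x; rewrite inE /= in_itv /= => /andP[xlx _].
  have x0 := lt_le_trans xl0 xlx.
  apply: cvgD; first by apply: cvgM; [exact: cvg_cst | exact: cvg_id].
  by apply: cvgM; [exact: cvg_cst | exact: continuous_chem_pot].
by exists x => //; move: xin; rewrite in_itv /= => /andP[/(lt_le_trans xl0)].
Qed.

End ChemicalPotential.

End Entropy.

Section GridOperators.
Variables (R : realType) (N0 : nat).
Hypothesis N0_gt0 : (0 < N0)%N.
Implicit Types (r d mu : grid R N0) (M : sgrid R N0).

Definition grid_le r r' := forall i j k, r i j k <= r' i j k.

Definition sgrid_pos M := forall i j k,
  [/\ 0 < sx M i j k, 0 < sy M i j k & 0 < sz M i j k].

Lemma gh_gt0 : 0 < gh R N0.
Proof. by rewrite /gh invr_gt0 ltr0n. Qed.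

Lemma grid_argmax d : exists i j k, forall i' j' k', d i' j' k' <= d i j k.
Proof.
pose i0 : 'I_N0 := Ordinal N0_gt0.
pose F (p : 'I_N0 * 'I_N0 * 'I_N0) := d p.1.1 p.1.2 p.2.
have [[[i j] k] _ max] := @arg_maxP _ R _ (i0, i0, i0) xpredT F erefl.
by exists i, j, k => i' j' k'; exact: (max (i', j', k')).
Qed.

Lemma grid_bounded d : exists S, forall i j k, `|d i j k| <= S.
Proof.
have [i [j [k max]]] := grid_argmax (fun i j k => `|d i j k|).
by exists `|d i j k|.
Qed.

Lemma div_smul_gradB M mu mu' i j k :
  div_h (smul M (grad_h (fun i j k => mu i j k - mu' i j k))) i j k
  = div_h (smul M (grad_h mu)) i j k - div_h (smul M (grad_h mu')) i j k.
Proof. rewrite /div_h /smul /grad_h /=; ring. Qed.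

(* Each of the six fluxes through the faces of the cell points downhill. *)
Lemma div_smul_grad_le0_at_max M d i j k : sgrid_pos M ->
  (forall i' j' k', d i' j' k' <= d i j k) ->
  div_h (smul M (grad_h d)) i j k <= 0.
Proof.
move=> Mpos max; have ih0 : 0 < (gh R N0)^-1 by rewrite invr_gt0 gh_gt0.
have ipK (x : 'I_N0) : ip (im x) = x by exact: ord_predK.
rewrite /div_h /smul /grad_h /= !ipK pmulr_lle0 //.
have [ax ay az] := Mpos i j k; have [bx _ _] := Mpos (im i) j k.
have [_ by' _] := Mpos i (im j) k; have [_ _ bz] := Mpos i j (im k).
have down w i' j' k' : 0 < w -> w * ((d i' j' k' - d i j k) / gh R N0) <= 0.
  by move=> w0; apply: mulr_ge0_le0 (ltW w0) _; rewrite pmulr_lle0 // subr_le0.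
have up w i' j' k' : 0 < w -> 0 <= w * ((d i j k - d i' j' k') / gh R N0).
  by move=> w0; apply: mulr_ge0 (ltW w0) (mulr_ge0 _ (ltW ih0)); rewrite subr_ge0.
have := down _ (ip i) j k ax; have := down _ i (ip j) k ay; have := down _ i j (ip k) az.
have := up _ (im i) j k bx; have := up _ i (im j) k by'; have := up _ i j (im k) bz.
lra.
Qed.

Definition offdiag_h M mu i j k : R :=
  (sx M i j k * mu (ip i) j k + sx M (im i) j k * mu (im i) j k
 + sy M i j k * mu i (ip j) k + sy M i (im j) k * mu i (im j) k
 + sz M i j k * mu i j (ip k) + sz M i j (im k) * mu i j (im k)) / (gh R N0 ^+ 2).

Definition diag_h M i j k : R :=
  (sx M i j k + sx M (im i) j k + sy M i j k + sy M i (im j) k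
 + sz M i j k + sz M i j (im k)) / (gh R N0 ^+ 2).

Lemma div_smul_gradE M mu i j k :
  div_h (smul M (grad_h mu)) i j k = offdiag_h M mu i j k - diag_h M i j k * mu i j k.
Proof.
have ipK (x : 'I_N0) : ip (im x) = x by exact: ord_predK.
by rewrite /div_h /smul /grad_h /offdiag_h /diag_h /= !ipK; field; rewrite gt_eqF ?gh_gt0.
Qed.

Lemma diag_h_gt0 M i j k : sgrid_pos M -> 0 < diag_h M i j k.
Proof.
move=> Mpos; rewrite /diag_h divr_gt0 ?exprn_gt0 ?gh_gt0 //.
have [ax ay az] := Mpos i j k; have [bx _ _] := Mpos (im i) j k.
have [_ by' _] := Mpos i (im j) k; have [_ _ bz] := Mpos i j (im k).
lra.
Qed.

Lemma offdiag_h_le M mu mu' i j k : sgrid_pos M -> grid_le mu mu' ->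
  offdiag_h M mu i j k <= offdiag_h M mu' i j k.
Proof.
move=> Mpos le_mu; rewrite /offdiag_h ler_pM2r ?invr_gt0 ?exprn_gt0 ?gh_gt0 //.
have [ax ay az] := Mpos i j k; have [bx _ _] := Mpos (im i) j k.
have [_ by' _] := Mpos i (im j) k; have [_ _ bz] := Mpos i j (im k).
by repeat apply: lerD; apply: ler_wpM2l; by [exact: ltW | exact: le_mu].
Qed.

Lemma offdiag_h_cst M mu m i j k : (forall i j k, mu i j k = m) ->
  offdiag_h M mu i j k = diag_h M i j k * m.
Proof. by move=> mu_m; rewrite /offdiag_h /diag_h !mu_m; field; rewrite gt_eqF ?gh_gt0. Qed.

Lemma div_smul_grad_comparison M dt r0 r r' mu mu' : sgrid_pos M -> 0 < dt ->
  (forall i j k, (r i j k - r0 i j k) / dt = div_h (smul M (grad_h mu)) i j k) ->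
  (forall i j k, (r' i j k - r0 i j k) / dt = div_h (smul M (grad_h mu')) i j k) ->
  (forall i j k, r i j k <= r' i j k -> mu i j k <= mu' i j k) ->
  grid_le mu mu'.
Proof.
move=> Mpos dt0 eq_r eq_r' mono.
have [i [j [k max]]] := grid_argmax (fun i j k => mu i j k - mu' i j k).
suff : mu i j k - mu' i j k <= 0 by move=> dmax i' j' k'; have := max i' j' k'; lra.
rewrite leNgt; apply/negP => dpos.
have lt_r : r' i j k < r i j k by rewrite ltNge; apply/negP => /mono; lra.
have := div_smul_grad_le0_at_max Mpos max.
rewrite div_smul_gradB -eq_r -eq_r' -mulrBl pmulr_lle0 ?invr_gt0 //.
lra.
Qed.

(* Knaster--Tarski: the pointwise supremum of the post-fixpoints in [lo, hi] is a fixpoint. *)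
Lemma grid_fixpoint (T : grid R N0 -> grid R N0) lo hi :
  grid_le lo hi -> grid_le lo (T lo) -> grid_le (T hi) hi ->
  (forall r r', grid_le lo r -> grid_le r r' -> grid_le (T r) (T r')) ->
  exists2 r, grid_le lo r & T r = r.
Proof.
move=> lo_hi lo_Tlo Thi_hi T_mono.
pose S := [set r | [/\ grid_le lo r, grid_le r hi & grid_le r (T r)]].
pose rs : grid R N0 := fun i j k => sup [set r i j k | r in S].
have loS : S lo by split=> // i j k.
have S_ub r i j k : S r -> r i j k <= rs i j k.
  move=> Sr; apply: ub_le_sup; last by exists r.
  by exists (hi i j k) => _ [r' [_ r'hi _] <-].
have lo_rs : grid_le lo rs by move=> i j k; exact: S_ub.
have rs_T : grid_le rs (T rs).
  move=> i j k; apply: ge_sup; first by exists (lo i j k), lo.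
  move=> _ [r Sr <-]; have [lo_r _ r_Tr] := Sr.
  by apply: le_trans (r_Tr i j k) _; apply: T_mono => // i' j' k'; exact: S_ub.
have T_rs_S : S (T rs).
  split=> [i j k | i j k | ]; first exact: le_trans (lo_rs i j k) (rs_T i j k).
    apply: le_trans (Thi_hi i j k); apply: T_mono => // i' j' k'.
    by apply: ge_sup; [exists (lo i' j' k'), lo | move=> _ [r [_ r_hi _] <-]].
  by apply: T_mono => // i j k; exact: le_trans (lo_rs i j k) (rs_T i j k).
exists rs => //; apply/funext => i; apply/funext => j; apply/funext => k.
by apply/le_anti; rewrite rs_T S_ub.
Qed.

End GridOperators.

Section Scheme.
Variables (R : realType) (N0 : nat) (dt C : R) (rho0 : grid R N0) (M : sgrid R N0).
Hypotheses (N0_gt0 : (0 < N0)%N) (dt_gt0 : 0 < dt) (M_pos : sgrid_pos M)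
  (rho0_gt0 : forall i j k, 0 < rho0 i j k).
Implicit Types (r : grid R N0) (m : R).

Definition mu_h r : grid R N0 := fun i j k => chem_pot C dt (rho0 i j k) (r i j k).

Definition solves r := forall i j k,
  (r i j k - rho0 i j k) / dt = div_h (smul M (grad_h (mu_h r))) i j k.

Lemma mu_h_mono r r' i j k : 0 < r i j k -> 0 < r' i j k ->
  (mu_h r i j k <= mu_h r' i j k) = (r i j k <= r' i j k).
Proof. exact: chem_pot_mono. Qed.

Lemma solves_le r r' : (forall i j k, 0 < r i j k) -> (forall i j k, 0 < r' i j k) ->
  solves r -> solves r' -> grid_le r r'.
Proof.
move=> r_gt0 r'_gt0 sol sol' i j k; rewrite -mu_h_mono //; move: i j k.
by apply: div_smul_grad_comparison sol sol' _ => // i j k; rewrite mu_h_mono.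
Qed.

Lemma dt_diag_gt0 i j k : 0 < dt * diag_h M i j k.
Proof. by rewrite mulr_gt0 ?diag_h_gt0. Qed.

(* The implicit-in-the-centre, explicit-in-the-neighbours update; its fixpoints are the solutions. *)
Lemma step_exists r i j k : exists x, 0 < x /\
  x + dt * diag_h M i j k * chem_pot C dt (rho0 i j k) x
  = rho0 i j k + dt * offdiag_h M (mu_h r) i j k.
Proof.
have [x x_gt0 eq_x] := affine_chem_pot_surj C dt_gt0 (rho0_gt0 i j k)
  (rho0 i j k + dt * offdiag_h M (mu_h r) i j k) ler01 (dt_diag_gt0 i j k).
by exists x; rewrite -eq_x mul1r.
Qed.

Definition step r : grid R N0 := fun i j k => sval (cid (step_exists r i j k)).

Lemma step_gt0 r i j k : 0 < step r i j k.
Proof. by case: (svalP (cid (step_exists r i j k))). Qed.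

Lemma stepE r i j k :
  step r i j k + dt * diag_h M i j k * mu_h (step r) i j k
  = rho0 i j k + dt * offdiag_h M (mu_h r) i j k.
Proof. by case: (svalP (cid (step_exists r i j k))). Qed.

Lemma step_mono r r' : (forall i j k, 0 < r i j k) -> grid_le r r' ->
  grid_le (step r) (step r').
Proof.
move=> r_gt0 le_rr' i j k.
rewrite -(affine_chem_pot_mono C dt_gt0 (rho0_gt0 i j k) ler01 (dt_diag_gt0 i j k)) ?posrE ?step_gt0 //.
rewrite !mul1r (stepE r) (stepE r') lerD2l ler_pM2l //.
apply: offdiag_h_le => // i' j' k'.
by rewrite mu_h_mono ?le_rr' // (lt_le_trans (r_gt0 i' j' k')).
Qed.

Lemma step_fixpoint_solves r : step r = r -> solves r.
Proof.
move=> fix_r i j k; have := stepE r i j k; rewrite fix_r (div_smul_gradE N0_gt0) => eq_r.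
have -> : r i j k - rho0 i j k
  = dt * (offdiag_h M (mu_h r) i j k - diag_h M i j k * mu_h r i j k) by lra.
by rewrite mulrC mulKf ?gt_eqF.
Qed.

Lemma level_exists m i j k : exists x, 0 < x /\ chem_pot C dt (rho0 i j k) x = m.
Proof.
have [x x_gt0 eq_x] := affine_chem_pot_surj C dt_gt0 (rho0_gt0 i j k) m (lexx 0) ltr01.
by exists x; rewrite -eq_x mul0r add0r mul1r.
Qed.

Definition level m : grid R N0 := fun i j k => sval (cid (level_exists m i j k)).

Lemma level_gt0 m i j k : 0 < level m i j k.
Proof. by case: (svalP (cid (level_exists m i j k))). Qed.

Lemma mu_h_level m i j k : mu_h (level m) i j k = m.
Proof. by case: (svalP (cid (level_exists m i j k))). Qed.

Lemma level_le m m' : m <= m' -> grid_le (level m) (level m').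
Proof. by move=> le_mm' i j k; rewrite -mu_h_mono ?level_gt0 // !mu_h_level. Qed.

Lemma step_levelE m i j k :
  step (level m) i j k + dt * diag_h M i j k * mu_h (step (level m)) i j k
  = rho0 i j k + dt * diag_h M i j k * m.
Proof. by rewrite stepE (offdiag_h_cst N0_gt0 M i j k (mu_h_level m)) mulrA. Qed.

Lemma level_le_step m : (forall i j k, m <= dFen C (rho0 i j k)) ->
  grid_le (level m) (step (level m)).
Proof.
move=> m_le i j k.
rewrite -(affine_chem_pot_mono C dt_gt0 (rho0_gt0 i j k) ler01 (dt_diag_gt0 i j k))
  ?posrE ?level_gt0 ?step_gt0 // !mul1r step_levelE -/(mu_h _ _ _ _) mu_h_level lerD2r.
by rewrite -(mu_h_mono (level_gt0 m i j k) (rho0_gt0 i j k)) mu_h_level /mu_h chem_pot_id.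
Qed.

Lemma step_le_level m : (forall i j k, dFen C (rho0 i j k) <= m) ->
  grid_le (step (level m)) (level m).
Proof.
move=> le_m i j k.
rewrite -(affine_chem_pot_mono C dt_gt0 (rho0_gt0 i j k) ler01 (dt_diag_gt0 i j k))
  ?posrE ?level_gt0 ?step_gt0 // !mul1r step_levelE -/(mu_h _ _ _ _) mu_h_level lerD2r.
by rewrite -(mu_h_mono (rho0_gt0 i j k) (level_gt0 m i j k)) mu_h_level /mu_h chem_pot_id.
Qed.

Lemma solves_exists : exists2 r, forall i j k, 0 < r i j k & solves r.
Proof.
have [S dFen_le] := grid_bounded N0_gt0 (fun i j k => dFen C (rho0 i j k)).
have le_S i j k : dFen C (rho0 i j k) <= S by have := dFen_le i j k; rewrite ler_norml => /andP[].
have S_le i j k : - S <= dFen C (rho0 i j k) by have := dFen_le i j k; rewrite ler_norml => /andP[].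
pose i0 : 'I_N0 := Ordinal N0_gt0.
have [r lo_r fix_r] := grid_fixpoint (level_le (le_trans (S_le i0 i0 i0) (le_S i0 i0 i0)))
  (level_le_step S_le) (step_le_level le_S)
  (fun r r' lo_r => step_mono (fun i j k => lt_le_trans (level_gt0 _ i j k) (lo_r i j k))).
exists r; last exact: step_fixpoint_solves.
by move=> i j k; exact: lt_le_trans (level_gt0 _ i j k) (lo_r i j k).
Qed.

End Scheme.

Theorem theorem3p5 (R : realType) (N0 : nat) (dt C : R) (D : R -> R)
  (rho0 rhohat : grid R N0) :
  (0 < N0)%N -> 0 < dt ->
  (forall x : R, 0 < x -> 0 < D x) ->
  (forall x : R, 0 < x -> {for x, continuous D}) ->
  (forall i j k, 0 < rho0 i j k) ->
  (forall i j k, 0 < rhohat i j k) ->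
  exists! rho1 : grid R N0,
    (forall i j k, 0 < rho1 i j k) /\ scheme dt C D rho0 rhohat rho1.
Proof.
move=> N0_gt0 dt_gt0 D_gt0 _ rho0_gt0 rhohat_gt0.
pose rhalf : grid R N0 := fun i j k => (rho0 i j k + rhohat i j k) / 2.
pose M := avg_h (fun i j k => D (rhalf i j k) * rhalf i j k).
have M_pos : sgrid_pos M.
  have DM_gt0 i j k : 0 < D (rhalf i j k) * rhalf i j k.
    by rewrite mulr_gt0 ?D_gt0 // divr_gt0 ?addr_gt0.
  by move=> i j k; split; rewrite /= divr_gt0 ?addr_gt0.
have [rho1 rho1_gt0 rho1_sol] := solves_exists C N0_gt0 dt_gt0 M_pos rho0_gt0.
have le_sol := solves_le (C := C) N0_gt0 dt_gt0 M_pos rho0_gt0.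
exists rho1; split; first exact: conj rho1_gt0 rho1_sol.
move=> rho1' [rho1'_gt0 rho1'_sol].
apply/funext => i; apply/funext => j; apply/funext => k.
by apply/le_anti; rewrite (le_sol rho1 rho1') ?(le_sol rho1' rho1).
Qed.
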